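(* For every integer $n\ge2$, $$\mathrm{ODP}(\mathrm{Tour}_n,\mathrm{Cycle}_n)=n\,x\,\mathrm{ODP}(\mathrm{Tour}_{n-1},\mathrm{Path}_{n-1}).$$
   Context: $\mathrm{Tour}_n$ is the directed graph on $[n]$ with edges $i\to j$ for all $n\ge i>j\ge1$. $\mathrm{Path}_n$ is the directed graph on $[n]$ with edges $i\to i+1$ for $1\le i\le n-1$. For $n\ge2$, $\mathrm{Cycle}_n$ is the directed multigraph on $[n]$ with edges $i\to i+1$ ($1\le i\le n-1$) and $n\to1$; for $n=2$ its edges are $1\to2$ and $2\to1$. For directed graphs $X,Y$ with $|V(X)|=|V(Y)|$, $\mathrm{DFS}(X,Y)$ has as vertices the bijections $\sigma:V(X)\to V(Y)$. For each $\sigma$ and ordered pair $(a,b)$ of distinct vertices, it has $m_X(a,b)m_Y(\sigma(a),\sigma(b))$ edges from $\sigma$ to $\sigma\circ(a\,b)$, where $m_X(a,b)$ is the number of edges $a\to b$ in $X$. Thus $\mathrm{outdeg}(\sigma)=\sum_{a\ne b}m_X(a,b)m_Y(\sigma(a),\sigma(b))$ and $\mathrm{ODP}(X,Y)=\sum_\sigma x^{\mathrm{outdeg}(\sigma)}$. *)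

From mathcomp Require Import all_boot all_order fingroup perm.
From mathcomp Require Import all_algebra.
Set Implicit Arguments. Unset Strict Implicit. Unset Printing Implicit Defensive.
Import GRing.Theory.
Local Open Scope ring_scope.

(* A directed multigraph on the vertex set [n] = {1,...,n} is represented by
   its edge-multiplicity function on 'I_n, where index k : 'I_n stands for
   vertex k+1.  m a b = number of edges a -> b. *)
Definition mgraph (n : nat) := 'I_n -> 'I_n -> nat.

Definition Tour (n : nat) : mgraph n := fun a b => (b < a)%N : nat.

Definition Path (n : nat) : mgraph n := fun a b => (b == a.+1 :> nat) : nat.

Definition Cycle (n : nat) : mgraph n :=
  fun a b => ((b == a.+1 :> nat) : nat) + (((a == n.-1 :> nat) && (b == 0 :> nat)) : nat).

(* Out-degree of the vertex sigma in DFS(X,Y), for |V(X)| = |V(Y)| = n;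
   vertices of DFS(X,Y) are the bijections V(X) -> V(Y), i.e. permutations. *)
Definition outdeg (n : nat) (X Y : mgraph n) (s : {perm 'I_n}) : nat :=
  (\sum_(a : 'I_n) \sum_(b : 'I_n | a != b) X a b * Y (s a) (s b))%N.

Definition ODP (n : nat) (X Y : mgraph n) : {poly int} :=
  \sum_(s : {perm 'I_n}) 'X^(outdeg X Y s).

Arguments Tour n : clear implicits.
Arguments Path n : clear implicits.
Arguments Cycle n : clear implicits.

From mathcomp Require Import all_boot all_order fingroup perm.
From mathcomp Require Import all_algebra.
From mathcomp Require Import zify.
Import GRing.Theory.
Set Implicit Arguments. Unset Strict Implicit. Unset Printing Implicit Defensive.
Local Open Scope group_scope.
Local Open Scope nat_scope.

(* Reindexing the sum by s^-1, an edge u -> u+1 of Cycle_n or Path_n pairs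
   with the Tour edge s^-1 u -> s^-1 (u+1) exactly when u is a descent of
   s^-1; so ODP(Tour_n, Cycle_n) counts cyclic descents and
   ODP(Tour_n, Path_n) ordinary descents.  Cyclic descents are invariant
   under rotating positions, so each of the n classes of permutations
   putting the maximum at a given position contributes as much as the class
   fixing the last position.  There the wrap-around from the maximum down to
   position 0 is one extra descent, and deleting the fixed maximum leaves a
   permutation of n-1 letters with the same ordinary descents. *)

Definition cdes n (t : {perm 'I_n}) : nat := \sum_(u : 'I_n) (t (ordS u) < t u).

Definition des n (t : {perm 'I_n}) : nat :=
  \sum_(u : 'I_n | u.+1 < n) (t (ordS u) < t u).

Lemma ordS_neq n (u : 'I_n) : 1 < n -> ordS u != u.
Proof.
move=> n_gt1; rewrite -val_eqE /=; have u_lt := ltn_ord u.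
case: (ltnP u.+1 n) => [lt_Su | le_nSu].
  by rewrite modn_small // gtn_eqF.
have -> : u.+1 = n by lia.
rewrite modnn; lia.
Qed.

Lemma Cycle_succ n (u w : 'I_n) : Cycle n u w = (w == ordS u).
Proof.
rewrite /Cycle -val_eqE /=; have w_lt := ltn_ord w; have u_lt := ltn_ord u.
case: (ltnP u.+1 n) => [lt_Su | le_nSu].
  by rewrite modn_small // (_ : (u == n.-1 :> nat) = false) ?addn0 //; apply/eqP; lia.
have -> : u.+1 = n by lia.
by rewrite modnn (_ : (u == n.-1 :> nat) = true) ?(ltn_eqF w_lt) //; apply/eqP; lia.
Qed.

Lemma Path_succ n (u w : 'I_n) : Path n u w = ((u.+1 < n) && (w == ordS u)).
Proof.
rewrite /Path -val_eqE /=; case: ltnP => [lt_Su | le_nSu]; first by rewrite modn_small.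
by rewrite (ltn_eqF (leq_trans (ltn_ord w) le_nSu)).
Qed.

Lemma outdeg_succ_graph n (X Y : mgraph n) (P : pred 'I_n) (s : {perm 'I_n}) :
  (forall u w, Y u w = (P u && (w == ordS u))) ->
  {in P, forall u, ordS u != u} ->
  outdeg X Y s = \sum_(u | P u) X (s^-1 u) (s^-1 (ordS u)).
Proof.
move=> Y_succ P_neq.
rewrite /outdeg (reindex_inj (@perm_inj _ s^-1)) /= [RHS]big_mkcond.
apply: eq_bigr => u _; rewrite permKV.
case Pu: (P u); last by rewrite big1 // => b _; rewrite Y_succ Pu muln0.
rewrite (bigD1 (s^-1 (ordS u))) /=; last by rewrite (inj_eq perm_inj) eq_sym P_neq.
rewrite Y_succ Pu permKV eqxx muln1 big1 ?addn0 // => b /andP[_ b_neq].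
by rewrite Y_succ Pu -(inj_eq (@perm_inj _ s^-1)) permK (negPf b_neq) muln0.
Qed.

Lemma outdeg_Tour_Cycle n (s : {perm 'I_n}) :
  1 < n -> outdeg (Tour n) (Cycle n) s = cdes s^-1.
Proof.
move=> n_gt1; rewrite (@outdeg_succ_graph _ _ _ predT) //.
- by move=> u w; rewrite Cycle_succ.
- by move=> u _; apply: ordS_neq.
Qed.

Lemma outdeg_Tour_Path n (s : {perm 'I_n}) : outdeg (Tour n) (Path n) s = des s^-1.
Proof.
rewrite (@outdeg_succ_graph _ _ _ (fun u : 'I_n => u.+1 < n)) //.
- exact: Path_succ.
- by move=> u lt_Su; apply: ordS_neq; apply: leq_ltn_trans lt_Su.
Qed.

Lemma ODP_invE n (X Y : mgraph n) (F : {perm 'I_n} -> nat) :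
  (forall s, outdeg X Y s = F s^-1) -> ODP X Y = (\sum_t 'X^(F t))%R.
Proof.
move=> outdegE; rewrite /ODP (reindex_inj (@invg_inj _)) /=.
by apply: eq_bigr => t _; rewrite outdegE invgK.
Qed.

Lemma ordSDl n (u c : 'I_n.+1) : ordS (u + c)%R = (ordS u + c)%R.
Proof. by apply: val_inj => /=; rewrite modnDml -addn1 modnDml addn1 addSn. Qed.

Definition rot_perm n (c : 'I_n.+1) : {perm 'I_n.+1} := perm (addIr c).

Lemma cdes_rot n (c : 'I_n.+1) (t : {perm 'I_n.+1}) :
  cdes (rot_perm c * t) = cdes t.
Proof.
rewrite /cdes [RHS](reindex_inj (addIr c)) /=.
by apply: eq_bigr => u _; rewrite !permM !permE ordSDl.
Qed.

Section RotationInvariantSums.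

Variables (n : nat) (V : nmodType) (F : {perm 'I_n.+1} -> V).
Hypothesis F_rot : forall c t, F (rot_perm c * t) = F t.

Lemma sum_rot_invariant_preim k :
  (\sum_(t : {perm 'I_n.+1} | t k == ord_max) F t =
   \sum_(t : {perm 'I_n.+1} | t ord_max == ord_max) F t)%R.
Proof.
rewrite (reindex_inj (mulgI (rot_perm (ord_max - k)%R))) /=.
apply: eq_big => t; last by rewrite F_rot.
by rewrite permM permE addrC subrK.
Qed.

Lemma sum_rot_invariant :
  (\sum_t F t = (\sum_(t : {perm 'I_n.+1} | t ord_max == ord_max) F t) *+ n.+1)%R.
Proof.
rewrite (partition_big (fun t : {perm 'I_n.+1} => t^-1 ord_max) predT) //=.
rewrite (eq_bigr (fun=> \sum_(t : {perm 'I_n.+1} | t ord_max == ord_max) F t)%R);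
  first by rewrite sumr_const card_ord.
move=> k _.
rewrite -(sum_rot_invariant_preim k); apply: eq_bigl => t.
by rewrite eq_sym -(inj_eq (@perm_inj _ t)) permKV.
Qed.

End RotationInvariantSums.

Section UnliftPerm.

Variables (n : nat) (i : 'I_n.+1).

(* Unlifting around s i rather than i makes this injective for every s, not
   only for those fixing i. *)
Definition unlift_perm_fun (s : {perm 'I_n.+1}) (k : 'I_n) : 'I_n :=
  odflt k (unlift (s i) (s (lift i k))).

Lemma lift_unlift_perm_fun (s : {perm 'I_n.+1}) k :
  lift (s i) (unlift_perm_fun s k) = s (lift i k).
Proof.
rewrite /unlift_perm_fun; have := neq_lift i k.
by rewrite -(inj_eq (@perm_inj _ s)) => /unlift_some[k' -> ->].
Qed.

Lemma unlift_perm_fun_inj (s : {perm 'I_n.+1}) : injective (unlift_perm_fun s).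
Proof.
move=> k1 k2 /(congr1 (lift (s i))); rewrite !lift_unlift_perm_fun.
by move/perm_inj/lift_inj.
Qed.

Definition unlift_perm (s : {perm 'I_n.+1}) : {perm 'I_n} :=
  perm (@unlift_perm_fun_inj s).

Lemma lift_permK : cancel (lift_perm i i) unlift_perm.
Proof.
move=> t; apply/permP => k.
by rewrite permE /unlift_perm_fun lift_perm_lift lift_perm_id liftK.
Qed.

Lemma unlift_permK (s : {perm 'I_n.+1}) :
  s i = i -> lift_perm i i (unlift_perm s) = s.
Proof.
move=> s_i; apply/permP => k; case: (unliftP i k) => [k'|] ->; last first.
  by rewrite lift_perm_id s_i.
by rewrite lift_perm_lift permE -lift_unlift_perm_fun s_i.
Qed.

Lemma sum_perm_fix (V : nmodType) (G : {perm 'I_n.+1} -> V) :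
  (\sum_(s : {perm 'I_n.+1} | s i == i) G s =
   \sum_(t : {perm 'I_n}) G (lift_perm i i t))%R.
Proof.
rewrite (reindex (lift_perm i i)) /=; last first.
  by exists unlift_perm => [t _ | s /eqP/unlift_permK //]; apply: lift_permK.
by apply: eq_bigl => t; rewrite lift_perm_id eqxx.
Qed.

End UnliftPerm.

Lemma cdes_lift_perm_max m (t : {perm 'I_m.+1}) :
  cdes (lift_perm ord_max ord_max t) = (des t).+1.
Proof.
set T := lift_perm _ _ t.
have T_lift k : T (lift ord_max k) = lift ord_max (t k) by apply: lift_perm_lift.
have lt_lift (j k : 'I_m.+1) : (lift ord_max j < lift ord_max k) = (j < k).
  by rewrite !lift_max.
have bump_max (k : 'I_m.+1) : bump m.+1 k = k by rewrite /bump leqNgt ltn_ord.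
rewrite -[(des t).+1]addn1 /cdes /des big_ord_recr /=; congr addn.
  rewrite [RHS]big_mkcond; apply: eq_bigr => i _.
  have -> : widen_ord (leqnSn m.+1) i = lift ord_max i.
    by apply: ord_inj; rewrite lift_max.
  case: ifP => lt_Si.
    have -> : ordS (lift ord_max i) = lift ord_max (ordS i).
      apply: ord_inj; rewrite /= bump_max /bump leqNgt !modn_small ?lt_Si //; lia.
    by rewrite !T_lift lt_lift.
  have -> : ordS (lift ord_max i) = ord_max.
    by apply: ord_inj; rewrite /= bump_max modn_small; have := ltn_ord i; lia.
  by rewrite lift_perm_id T_lift lift_max ltnNge ltnW.
have -> : ordS (@ord_max m.+1) = lift ord_max ord0 by apply: val_inj; rewrite /= modnn.
by rewrite T_lift lift_perm_id lift_max /= ltn_ord.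
Qed.

Lemma ODP_Tour_Cycle n :
  1 < n -> ODP (Tour n) (Cycle n) = (\sum_(t : {perm 'I_n}) 'X^(cdes t))%R.
Proof. by move=> n_gt1; apply: ODP_invE => s; apply: outdeg_Tour_Cycle. Qed.

Lemma ODP_Tour_Path n : ODP (Tour n) (Path n) = (\sum_(t : {perm 'I_n}) 'X^(des t))%R.
Proof. by apply: ODP_invE => s; apply: outdeg_Tour_Path. Qed.

Local Open Scope ring_scope.

Theorem mainTheorem13 (n : nat) (hn : (2 <= n)%N) :
  ODP (Tour n) (Cycle n) = ((n%:R : int) *: 'X) * ODP (Tour n.-1) (Path n.-1).
Proof.
case: n hn => [|[|m]] // n_gt1; rewrite ODP_Tour_Cycle // ODP_Tour_Path /=.
rewrite sum_rot_invariant; last by move=> c t; rewrite cdes_rot.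
rewrite sum_perm_fix -scalerAl scaler_nat big_distrr /=; congr (_ *+ _).
by apply: eq_bigr => t _; rewrite cdes_lift_perm_max exprS.
Qed.
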